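(* Let $A$ be a finite group with a normal subgroup $G$ such that $A/G$ is cyclic. Let $X,Y\in A$ have the same image in $A/G$. Suppose there is a positive integer $r$ such that $X^r$ is conjugate to $Y^r$ in $A$ but $X^d$ is not conjugate to $Y^d$ in $A$ for every proper divisor $d$ of $r$. Then $r$ divides $|G|$.
   Context: A proper divisor of a positive integer $n$ is a positive divisor of $n$ strictly less than $n$. *)

From mathcomp Require Import all_boot all_fingroup all_solvable.
Set Implicit Arguments.
Unset Strict Implicit.
Unset Printing Implicit Defensive.

From mathcomp Require Import all_boot all_fingroup all_solvable.
Set Implicit Arguments.
Unset Strict Implicit.
Unset Printing Implicit Defensive.
Open Scope group_scope.

(* Suppose the p-part of r does not divide |G| for some prime p, and put d = r/p, so that
   |G|_p divides d.  After conjugating X we may assume X^r = Y^r, i.e. (X^d)^p = (Y^d)^p;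
   hence X^d and Y^d have the same p'-part c, and their p-parts are u^d and v^d, where
   u, v are the p-parts of X and Y.  Both u and v centralize c and are congruent modulo G.
   Let P be a Sylow p-subgroup of C = C_A(c) containing u; some C-conjugate v' of v lies
   in P, and u^-1 v' lies in P :&: G because A/G is abelian.  In a p-group,
   (x n)^|N| is conjugate to x^|N| for n in a normal subgroup N (induct through a central
   subgroup of order p), and |P :&: G| divides d; so v^d is C-conjugate to u^d, and then
   Y^d is conjugate to X^d, against the minimality of r. *)

Lemma partn_dvd_div_of_partn_ndvd (p r m : nat) :
  prime p -> ~~ (r`_p %| m) -> m`_p %| r %/ p.
Proof.
move=> pr_p rp_ndv_m.
have [m0 | m_gt0] := posnP m; first by rewrite m0 dvdn0 in rp_ndv_m.
have k_gt0 : 0 < logn p r.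
  by rewrite lt0n; apply: contra rp_ndv_m => /eqP k0; rewrite p_part k0 dvd1n.
have p_dv_r : p %| r by move: k_gt0; rewrite logn_gt0 mem_primes => /and3P[].
rewrite dvdn_divRL // (dvdn_trans _ (dvdn_part p r)) // !p_part -expnSr dvdn_exp2l //.
by rewrite ltnNge -pfactor_dvdn // -p_part.
Qed.

Section PowerConjugacy.

Variable gT : finGroupType.
Implicit Types (H N P Z : {group gT}) (x y : gT).

Lemma class_expg H x y n : y \in x ^: H -> y ^+ n \in (x ^+ n) ^: H.
Proof. by case/imsetP=> g gH ->; rewrite -conjXg memJ_class. Qed.

Lemma pgroup_normal_center_elt (p : nat) P N :
  p.-group P -> N <| P -> N :!=: 1 -> exists2 z, z \in N :&: 'Z(P) & #[z] = p.
Proof.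
move=> pP nNP ntN.
have pNZ : p.-group (N :&: 'Z(P)).
  by apply: pgroupS pP; rewrite subIset // normal_sub.
have [pr_p p_dv_NZ _] := pgroup_pdiv pNZ (meet_center_nil (pgroup_nil pP) nNP ntN).
by have [z] := Cauchy pr_p p_dv_NZ; exists z.
Qed.

Lemma class_expg_central_quotient P Z w y :
  P \subset 'C(Z) -> w \in P -> y \in P ->
  coset Z w \in coset Z y ^: (P / Z) -> w ^+ #|Z| \in (y ^+ #|Z|) ^: P.
Proof.
move=> cZP wP yP /imsetP[_ /morphimP[g _ gP ->]].
have nZP : P \subset 'N(Z) := subset_trans cZP (cent_sub Z).
have ygP : y ^ g \in P by rewrite groupJ.
rewrite -morphJ ?(subsetP nZP) //.
case/(rcoset_kercosetP (subsetP nZP w wP) (subsetP nZP _ ygP))/rcosetP=> z zZ ->.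
have czy : commute z (y ^ g) by apply/commute_sym/(centP (subsetP cZP _ ygP)).
by rewrite expgMn // (expg_cardG zZ) mul1g -conjXg memJ_class.
Qed.

Lemma p'elt_expg_inj (p : nat) x y :
  prime p -> p^'.-elt x -> p^'.-elt y -> x ^+ p = y ^+ p -> x = y.
Proof.
move=> pr_p p'x p'y xy_p.
have co_p (z : gT) : p^'.-elt z -> coprime #|<[z]>| p.
  by move=> p'z; apply: p'nat_coprime p'z (pnat_id pr_p).
have x_pow : x = (y ^+ p) ^+ expg_invn <[x]> p.
  by rewrite -xy_p expgK ?co_p ?cycle_id.
have cxy : commute x y^-1.
  by rewrite x_pow -expgM; apply/commuteV/commute_sym/commuteX.
have xy'_y : x * y^-1 \in <[y]>.
  by rewrite groupM ?groupV ?cycle_id // x_pow -expgM mem_cycle.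
have : #[x * y^-1] %| gcdn #|<[y]>| p.
  by rewrite dvdn_gcd (order_dvdG xy'_y) order_dvdn expgMn // expgVn xy_p mulgV eqxx.
by rewrite (eqP (co_p y p'y)) dvdn1 order_eq1 -eq_mulgV1 => /eqP.
Qed.

End PowerConjugacy.

Lemma pgroup_expgMn_class (p : nat) (gT : finGroupType) (P N : {group gT}) x n :
  p.-group P -> N <| P -> x \in P -> n \in N ->
  (x * n) ^+ #|N| \in (x ^+ #|N|) ^: P.
Proof.
move Dm: #|N| => m; elim/ltn_ind: m gT P N x n Dm => m IHm gT P N x n oN pP nNP xP nN.
have [N1 | ntN] := eqVneq N 1%G.
  by move: nN oN; rewrite N1 inE cards1 => /eqP-> <-; rewrite mulg1 class_refl.
have [z /setIP[zN zZ] oz] := pgroup_normal_center_elt pP nNP ntN.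
set Z := <[z]>%G.
have oZ : #|Z| = p by [].
have cZP : P \subset 'C(Z) by rewrite centsC cycle_subG; case/setIP: zZ.
have nZP : P \subset 'N(Z) := subset_trans cZP (cent_sub Z).
have sNP := normal_sub nNP; have nP := subsetP sNP n nN.
have oNZ : #|N / Z| = m %/ p.
  by rewrite card_quotient ?(subset_trans sNP nZP) // -divgS ?cycle_subG // oN oZ.
have m'_lt_m : m %/ p < m.
  have [pr_p _ _] := pgroup_pdiv (pgroupS sNP pP) ntN.
  by rewrite ltn_Pdiv ?prime_gt1 // -oN cardG_gt0.
have := IHm _ m'_lt_m _ _ _ _ _ oNZ (quotient_pgroup Z pP) (quotient_normal Z nNP)
  (mem_quotient Z xP) (mem_quotient Z nN).
rewrite -morphM ?(subsetP nZP) // -!morphX ?(subsetP nZP) ?groupM //.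
move/(class_expg_central_quotient cZP (groupX _ (groupM xP nP)) (groupX _ xP)).
by rewrite oZ -!expgM divnK // -oN -oZ cardSg ?cycle_subG.
Qed.

Section ConjugacyModNormal.

Variable gT : finGroupType.
Implicit Types (A G H : {group gT}) (a b u v : gT).

Lemma pelt_expg_class_mod (p n : nat) H G u v :
  H \subset 'N(G) -> [~: H, H] \subset G -> #|G|`_p %| n ->
  u \in H -> v \in H -> p.-elt u -> p.-elt v -> u^-1 * v \in G ->
  v ^+ n \in (u ^+ n) ^: H.
Proof.
move=> nGH dHG Gp_n uH vH pu pv uvG.
have [P sylP uP] := Sylow_superset (etrans (cycle_subG u H) uH) pu.
have [h hH vhP] := Sylow_Jsub sylP (etrans (cycle_subG v H) vH) pv.
have sPH := pHall_sub sylP; have pP := pHall_pgroup sylP.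
rewrite cycle_subG in uP; rewrite -cycleJ cycle_subG in vhP.
have nNP : P :&: G <| P := norm_normalI (subset_trans sPH nGH).
have uvhN : u^-1 * v ^ h \in P :&: G.
  rewrite inE groupM ?groupV //= conjg_mulR mulgA groupM //.
  by rewrite (subsetP dHG) // mem_commg.
have := pgroup_expgMn_class pP nNP uP uvhN; rewrite mulKVg.
have /dvdnP[k ->] : #|P :&: G| %| n.
  apply: dvdn_trans Gp_n; rewrite -(part_pnat_id (pgroupS (subsetIl P G) pP)).
  by rewrite partn_dvd ?cardSg ?subsetIr.
move/(class_expg k); rewrite -!expgM mulnC -conjXg => /imsetP[g gP vhn].
by rewrite -(conjgK h (v ^+ _)) vhn -conjgM memJ_class // groupM ?groupV // (subsetP sPH).
Qed.

Lemma class_expg_of_expg_prime_eq (p s : nat) A G a b :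
  prime p -> A \subset 'N(G) -> [~: A, A] \subset G -> #|G|`_p %| s ->
  a \in A -> b \in A -> coset G a = coset G b ->
  (a ^+ s) ^+ p = (b ^+ s) ^+ p -> b ^+ s \in (a ^+ s) ^: A.
Proof.
move=> pr_p nGA dAG Gp_s aA bA Gab ab_sp.
set c := (a ^+ s).`_p^'.
have cb : (b ^+ s).`_p^' = c.
  by apply: (p'elt_expg_inj pr_p); rewrite ?p_elt_constt // -!consttX ab_sp.
set C := 'C_A[c]%G.
have sCA : C \subset A := subsetIl A _.
have constt_C w : w \in A -> c \in <[w ^+ s]> -> w.`_p \in C.
  move=> wA cws; apply/subcent1P; split.
    by rewrite (subsetP _ _ (cycle_constt p w)) ?cycle_subG.
  apply: (centsP (cycle_abelian w)); rewrite ?cycle_constt //.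
  exact: subsetP (cycleX w s) c cws.
have apC : a.`_p \in C by rewrite constt_C ?cycle_constt.
have bpC : b.`_p \in C by rewrite constt_C // -cb cycle_constt.
have nG t : t \in C -> t \in 'N(G) := fun tC => subsetP nGA t (subsetP sCA t tC).
have abpG : (a.`_p)^-1 * b.`_p \in G.
  apply: coset_idr; rewrite ?groupM ?groupV ?nG //.
  rewrite morphM ?groupV ?nG // morphV ?nG // !morph_constt ?(subsetP nGA) //.
  by change (((coset G a).`_p)^-1 * (coset G b).`_p = 1); rewrite Gab mulVg.
have := pelt_expg_class_mod (subset_trans sCA nGA) (subset_trans (commgSS sCA sCA) dAG)
  Gp_s apC bpC (p_elt_constt p a) (p_elt_constt p b) abpG.
rewrite -!consttX => /imsetP[h /subcent1P[hA chc] bsp].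
have chc' : c ^ h = c by rewrite conjgE chc mulKg.
by rewrite -(consttC p (b ^+ s)) bsp cb -chc' -conjMg consttC memJ_class.
Qed.

End ConjugacyModNormal.

Theorem lemma6p3 (gT : finGroupType) (A G : {group gT}) (X Y : gT) (r : nat) :
  G <| A -> cyclic (A / G) ->
  X \in A -> Y \in A -> coset G X = coset G Y ->
  0 < r ->
  Y ^+ r \in (X ^+ r) ^: A ->
  (forall d : nat, d %| r -> d < r -> Y ^+ d \notin (X ^+ d) ^: A) ->
  r %| #|G|.
Proof.
move=> /normal_norm nGA /cyclic_abelian abAG XA YA GXY r_gt0 Yr_XrA r_min.
have dAG : [~: A, A] \subset G := der1_min nGA abAG.
apply/(dvdn_partP _ r_gt0) => p; rewrite mem_primes => /and3P[pr_p _ p_dv_r].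
apply/negPn/negP => /(partn_dvd_div_of_partn_ndvd pr_p) Gp_dv.
have d_dv_r : r %/ p %| r by rewrite dvdn_div.
have d_lt_r : r %/ p < r by rewrite ltn_Pdiv ?prime_gt1.
apply: (negP (r_min _ d_dv_r d_lt_r)).
case/imsetP: Yr_XrA => g gA Yr.
have GXgY : coset G (X ^ g) = coset G Y.
  by rewrite conjg_mulR coset_kerr ?(subsetP dAG) ?mem_commg.
rewrite -(classGidl _ gA) conjXg.
apply: (class_expg_of_expg_prime_eq pr_p nGA dAG Gp_dv) GXgY _; rewrite ?groupJ //.
by rewrite -!expgM divnK // -conjXg Yr.
Qed.
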